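(* Let $G$ be a Polish group with identity $1_G$, let $A\subseteq G$, and suppose the Borel probability measure $\mu$ witnesses that $A$ is openly Haar null. Let $V$ be a neighborhood of $1_G$. Then there exists a Borel probability measure $\mu'$ on $G$ which also witnesses that $A$ is openly Haar null and whose support is compact and contained in $V$.
   Context: A Polish group is a topological group whose topology is separable and completely metrizable. A Borel probability measure $\mu$ on $G$ witnesses that $A\subseteq G$ is openly Haar null if for every $\varepsilon>0$ there is an open set $U\supseteq A$ with $\mu(gUh)<\varepsilon$ for all $g,h\in G$. *)

From HB Require Import structures.
From mathcomp Require Import all_boot all_order all_algebra.
From mathcomp Require Import all_classical all_reals all_analysis.
Set Implicit Arguments. Unset Strict Implicit. Unset Printing Implicit Defensive.
Import Order.TTheory GRing.Theory Num.Theory.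
Local Open Scope classical_set_scope.
Local Open Scope ring_scope.

Definition is_topological_group (G : ptopologicalType)
  (mul : G -> G -> G) (inv : G -> G) (one : G) : Prop :=
  [/\ (forall x y z, mul x (mul y z) = mul (mul x y) z),
      (forall x, mul one x = x /\ mul x one = x),
      (forall x, mul (inv x) x = one /\ mul x (inv x) = one),
      continuous (fun p : G * G => mul p.1 p.2) &
      continuous inv].

Definition separable_space (G : ptopologicalType) : Prop :=
  exists D : set G, countable D /\ dense D.

Definition complete_compatible_metric (R : realType) (G : ptopologicalType)
  (d : G -> G -> R) : Prop :=
  [/\ (forall x y, d x y = 0 <-> x = y),
      (forall x y, d x y = d y x),
      (forall x y z, d x z <= d x y + d y z),
      (forall U : set G, open U <->
         (forall x, U x -> exists2 e : R, 0 < e & [set y | d x y < e] `<=` U)) &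
      (forall u : nat -> G,
         (forall e : R, 0 < e -> exists N : nat, forall m n : nat,
             (N <= m)%N -> (N <= n)%N -> d (u m) (u n) < e) ->
         exists x : G, u @ \oo --> x)].

Definition completely_metrizable (R : realType) (G : ptopologicalType) : Prop :=
  exists d : G -> G -> R, complete_compatible_metric d.

Definition polish_space (R : realType) (G : ptopologicalType) : Prop :=
  separable_space G /\ completely_metrizable R G.

Definition borel (G : ptopologicalType) : measurableType _ := @g_sigma_algebraType G (@open G).

Definition witnesses_openly_haar_null (R : realType) (G : ptopologicalType)
  (mul : G -> G -> G) (mu : probability (borel G) R) (A : set G) : Prop :=
  forall eps : R, 0 < eps -> exists U : set G,
    [/\ open U, A `<=` U &
        forall g h : G, (mu [set mul (mul g u) h | u in U] < eps%:E)%E].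

Definition msupport (R : realType) (G : ptopologicalType)
  (mu : probability (borel G) R) : set G :=
  [set x | forall U : set G, open U -> U x -> (0 < mu U)%E].

From HB Require Import structures.
From mathcomp Require Import all_boot all_order all_algebra.
From mathcomp Require Import all_classical all_reals all_analysis.
From mathcomp Require Import lra.
Import Order.TTheory GRing.Theory Num.Theory.
Local Open Scope classical_set_scope.
Local Open Scope ring_scope.
Set Implicit Arguments. Unset Strict Implicit. Unset Printing Implicit Defensive.

(* A Borel probability measure on a Polish space is tight. Translates e_n W of
   a small ball W around 1, with (e_n) dense, cover G, so one of them has
   positive measure, and so does its intersection S with a compact set whose
   complement has smaller measure. Restricting mu to S, translating back by
   e_n^-1 and normalising gives a probability measure with compact support
   close to 1, hence inside V. It is bounded by a constant multiple of a
   translate of mu, and the witness condition is invariant under two-sided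
   translation, so it still witnesses that A is openly Haar null. *)

Lemma probability_cover_gt0 d (T : measurableType d) (R : realType)
    (mu : probability T R) (B : nat -> set T) :
  (forall n, measurable (B n)) -> \bigcup_n B n = setT -> exists n, (0 < mu (B n))%E.
Proof.
move=> mB BT; apply/not_existsP => muB0.
have {}muB0 n : mu (B n) = 0%E.
  by apply/eqP; rewrite eq_le measure_ge0 andbT leNgt; apply/negP; exact: muB0.
have := measure_sigma_subadditive mu mB measurableT (_ : setT `<=` _).
rewrite BT => /(_ (subset_refl _)).
rewrite eseries0 => [mu1_le0|n _ _]; last exact: muB0.
suff : (1 <= 0 :> \bar R)%E by rewrite lee_fin ler10.
by rewrite -(probability_setT mu); exact: mu1_le0.
Qed.

Lemma measure_setI_gt0 d (T : measurableType d) (R : realType)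
    (mu : {content set T -> \bar R}) (B K C : set T) :
  measurable B -> measurable K -> measurable C -> B `<=` C ->
  (mu (~` K) < mu B)%E -> (0 < mu (K `&` C))%E.
Proof.
move=> mB mK mC BC muKB; rewrite lt_neqAle measure_ge0 andbT; apply/eqP => muKC0.
have BKC : B `<=` (K `&` C) `|` ~` K.
  by move=> x Bx; have [Kx|] := pselect (K x); [left; split => //; exact: BC | right].
have mKC : measurable (K `&` C) by exact: measurableI.
have mKCK : measurable (K `&` C `|` ~` K) by apply: measurableU => //; exact: measurableC.
have := le_trans (le_measure mu (mem_set mB) (mem_set mKCK) BKC)
  (measureU2 mu mKC (measurableC mK)).
by rewrite -muKC0 add0e leNgt muKB.
Qed.

Section dominated_image.
Context d1 d2 (T1 : measurableType d1) (T2 : measurableType d2) (R : realType).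
Variables (mu : probability T1 R) (f : T1 -> T2) (S : set T1).
Hypotheses (mf : measurable_fun setT f) (mS : measurable S) (muS : (0 < mu S)%E).

Let muS_fin : mu S \is a fin_num.
Proof. by rewrite ge0_fin_numE ?measure_ge0 ?(le_lt_trans (probability_le1 _ mS)) ?ltry. Qed.

(* The measure structure of [pushforward] depends on the proof [mf], which
   inference cannot find. The fallback [dirac] of [mnormalize] is never used,
   as 0 < mu S < +oo. *)
Let P : probability T2 R.
Proof.
by refine (mnormalize (pushforward (mrestr mu mS) f) (@dirac _ T2 (f point) R)); exact: mf.
Defined.

Let PE X : P X = (mu (f @^-1` X `&` S) * (fine (mu S))^-1%:E)%E.
Proof.
have muT : mu (f @^-1` setT `&` S) = mu S by rewrite preimage_setT setTI.
have muS_oo : (mu S == +oo)%E = false by move: muS_fin; rewrite fin_numE => /andP[_ /negbTE].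
rewrite /P /= /mnormalize.
(* The total mass of the image measure is [mu S] only up to conversion. *)
rewrite -[X in X == 0]/(mu (f @^-1` setT `&` S)) -[X in (X == +oo)%E]/(mu (f @^-1` setT `&` S)).
rewrite -[X in fine X]/(mu (f @^-1` setT `&` S)) muT.
by rewrite (gt_eqF muS) muS_oo.
Qed.

Lemma dominated_probability_on_image : exists2 c : R, 0 < c &
  exists P : probability T2 R, P (~` (f @` S)) = 0%E /\
    forall X, measurable X -> (P X <= c%:E * mu (f @^-1` X))%E.
Proof.
have c0 : 0 < (fine (mu S))^-1 by rewrite invr_gt0 fine_gt0 // muS ltey_eq muS_fin.
exists (fine (mu S))^-1 => //; exists P; split.
  rewrite PE; have -> : f @^-1` (~` (f @` S)) `&` S = set0.
    by apply/seteqP; split => // x [fxS Sx]; apply: fxS; exists x.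
  by rewrite measure0 mul0e.
move=> X mX; have mfX : measurable (f @^-1` X) by rewrite -[_ @^-1` _]setTI; exact: mf.
rewrite PE muleC lee_wpmul2l ?lee_fin ?(ltW c0) //.
by apply: le_measure; rewrite ?inE //; exact: measurableI.
Qed.

End dominated_image.

Lemma measurable_open (G : ptopologicalType) (U : set G) :
  open U -> measurable (U : set (borel G)).
Proof. exact: sub_sigma_algebra. Qed.

Lemma measurable_closed (G : ptopologicalType) (C : set G) :
  closed C -> measurable (C : set (borel G)).
Proof.
by move=> cC; rewrite -[C]setCK; apply: measurableC; apply: measurable_open; exact: closed_openC.
Qed.

Lemma measurable_continuous (G : ptopologicalType) (f : G -> G) :
  continuous f -> measurable_fun setT (f : borel G -> borel G).
Proof.
move=> cf; apply: (@measurability _ _ (borel G) (borel G) setT f (@open G)) => //.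
move=> _ [B oB <-]; rewrite setTI; apply: measurable_open.
by apply: open_comp => // x _; exact: cf.
Qed.

Lemma closed_msupport (R : realType) (G : ptopologicalType) (mu : probability (borel G) R) :
  closed (msupport mu).
Proof.
move=> x clx U oU Ux.
by have [y [suppy Uy]] := clx U (open_nbhs_nbhs (conj oU Ux)); exact: suppy.
Qed.

Lemma msupport_subset (R : realType) (G : ptopologicalType) (mu : probability (borel G) R)
    (C : set G) :
  closed C -> mu (~` C) = 0%E -> msupport mu `<=` C.
Proof.
move=> cC muC0 x suppx; apply/not_notP => Cx.
by have := suppx _ (closed_openC cC) Cx; rewrite muC0 ltxx.
Qed.

Section topological_group.
Variables (G : ptopologicalType) (mul : G -> G -> G) (inv : G -> G) (one : G).
Hypothesis HG : is_topological_group mul inv one.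

Let mulgA x y z : mul x (mul y z) = mul (mul x y) z.
Proof. by case: HG. Qed.
Let mul1g x : mul one x = x.
Proof. by case: HG => _ h _ _ _; case: (h x). Qed.
Let mulg1 x : mul x one = x.
Proof. by case: HG => _ h _ _ _; case: (h x). Qed.
Let mulVg x : mul (inv x) x = one.
Proof. by case: HG => _ _ h _ _; case: (h x). Qed.
Let mulgV x : mul x (inv x) = one.
Proof. by case: HG => _ _ h _ _; case: (h x). Qed.
Let mulKg a x : mul (inv a) (mul a x) = x.
Proof. by rewrite mulgA mulVg mul1g. Qed.
Let mulVKg a x : mul a (mul (inv a) x) = x.
Proof. by rewrite mulgA mulgV mul1g. Qed.
Let mulgK a x : mul (mul x a) (inv a) = x.
Proof. by rewrite -mulgA mulgV mulg1. Qed.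
Let mulgKV a x : mul (mul x (inv a)) a = x.
Proof. by rewrite -mulgA mulVg mulg1. Qed.

Lemma continuous_mull a : continuous (mul a).
Proof.
move=> x; case: HG => _ _ _ cmul _.
have pair_cvg : (fun y => (a, y)) @ x --> (a, x).
  by apply: cvg_pair; [exact: cvg_cst | exact: cvg_id].
exact: (cvg_comp _ _ pair_cvg (cmul (a, x))).
Qed.

Lemma continuous_mulr a : continuous (mul^~ a).
Proof.
move=> x; case: HG => _ _ _ cmul _.
have pair_cvg : (fun y => (y, a)) @ x --> (x, a).
  by apply: cvg_pair; [exact: cvg_id | exact: cvg_cst].
exact: (cvg_comp _ _ pair_cvg (cmul (x, a))).
Qed.

Lemma open_preimage_mull a (W : set G) : open W -> open (mul a @^-1` W).
Proof. by apply: open_comp => x _; exact: continuous_mull. Qed.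

Lemma closed_preimage_mull a (C : set G) : closed C -> closed (mul a @^-1` C).
Proof. by apply: preimage_closed => x _; exact: continuous_mull. Qed.

Lemma translate_preimage g h (U : set G) :
  [set mul (mul g u) h | u in U] = (fun x => mul (mul (inv g) x) (inv h)) @^-1` U.
Proof.
apply/seteqP; split => [x [u Uu <-]|x Ux] /=; first by rewrite mulgA mulKg mulgK.
by exists (mul (mul (inv g) x) (inv h)) => //; rewrite mulgA mulVKg mulgKV.
Qed.

Lemma open_translate g h (U : set G) : open U -> open [set mul (mul g u) h | u in U].
Proof.
move=> oU; rewrite translate_preimage; apply: open_comp => // x _.
by apply: (continuous_comp (f := mul (inv g)) (g := mul^~ (inv h)));
  [exact: continuous_mull | exact: continuous_mulr].
Qed.

Lemma preimage_mull_translate a g h (U : set G) :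
  mul (inv a) @^-1` [set mul (mul g u) h | u in U] =
  [set mul (mul (mul a g) u) h | u in U].
Proof.
apply/seteqP; split => [x [u Uu ex]|x [u Uu <-]] /=; exists u => //.
  by rewrite -[x](mulVKg a) -ex !mulgA.
by rewrite !mulgA mulVg mul1g.
Qed.

Lemma image_mull a (S : set G) : mul a @` S = mul (inv a) @^-1` S.
Proof.
apply/seteqP; split => [_ [x Sx <-]|x Sx] /=; first by rewrite mulKg.
by exists (mul (inv a) x) => //; rewrite mulVKg.
Qed.

Lemma closed_image_mull a (S : set G) : closed S -> closed (mul a @` S).
Proof. by rewrite image_mull; exact: closed_preimage_mull. Qed.

Lemma compact_image_mull a (S : set G) : compact S -> compact (mul a @` S).
Proof. by apply: continuous_compact; apply: continuous_subspaceT; exact: continuous_mull. Qed.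

Lemma left_translates_cover (e : nat -> G) (W : set G) :
  dense (range e) -> open W -> W one -> forall y, exists n, W (mul (inv (e n)) y).
Proof.
move=> de oW W1 y.
have oO : open [set z | W (mul (inv z) y)].
  apply: open_comp => // z _; apply: (continuous_comp (f := inv) (g := mul^~ y)).
    by case: HG => _ _ _ _; apply.
  exact: continuous_mulr.
have [z [Wz [n _ en]]] : [set z | W (mul (inv z) y)] `&` range e !=set0.
  by apply: (de _ _ oO); exists y; rewrite /= mulVg.
by exists n; rewrite en.
Qed.

Lemma probability_left_translate_gt0 (R : realType) (mu : probability (borel G) R)
    (e : nat -> G) (W : set G) :
  dense (range e) -> open W -> W one -> exists n, (0 < mu (mul (inv (e n)) @^-1` W))%E.
Proof.
move=> de oW W1; apply: probability_cover_gt0 => [n|].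
  by apply: measurable_open; exact: open_preimage_mull.
apply/seteqP; split => // y _; have [n Wn] := left_translates_cover de oW W1 y.
by exists n.
Qed.

Lemma witnesses_openly_haar_null_dominated (R : realType) (A : set G)
    (mu P : probability (borel G) R) (a : G) (c : R) : 0 < c ->
  (forall X : set G, open X -> (P X <= c%:E * mu (mul (inv a) @^-1` X))%E) ->
  witnesses_openly_haar_null mul mu A -> witnesses_openly_haar_null mul P A.
Proof.
move=> c0 Pmu muA eps eps0.
have [U [oU AU muU]] := muA (eps / c) (divr_gt0 eps0 c0).
exists U; split => // g h.
rewrite (le_lt_trans (Pmu _ (open_translate _ _ oU))) // preimage_mull_translate.
by rewrite -(@lte_pdivlMl _ c) // -EFinM mulrC muU.
Qed.

End topological_group.

Lemma dense_seq_of_separable (G : ptopologicalType) :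
  separable_space G -> exists e : nat -> G, dense (range e).
Proof.
move=> [D [/pcard_surjP [e De] Dd]]; exists e => O O0 oO.
have [x [Ox Dx]] := Dd O O0 oO.
by have [n _ enx] := De x Dx; exists x; split => //; exists n.
Qed.

Lemma ultra_bigcup_ord T (F : set_system T) (S : nat -> set T) n :
  UltraFilter F -> F (\bigcup_(i < n) S i) -> exists i, F (S i).
Proof.
move=> UF; have PF := ultra_proper (F := F).
elim: n => [|n IHn]; first by rewrite bigcup_mkord big_ord0 => /filter_ex [].
rewrite bigcup_mkord big_ord_recr /= -bigcup_mkord => FSn.
have [FS|FSC] := in_ultra_setVsetC (S n) UF; first by exists n.
by apply: IHn; apply: filterS (filterI FSn FSC) => x [[]].
Qed.

(* A named constant, so that [lra] treats it as an atom. *)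
Definition radius {R : realType} (k : nat) : R := k.+1%:R^-1.

Lemma radius_gt0 (R : realType) k : 0 < radius k :> R.
Proof. by rewrite invr_gt0 ltr0n. Qed.

Lemma radius_le (R : realType) m n : (m <= n)%N -> radius n <= radius m :> R.
Proof. by move=> mn; rewrite lef_pV2 ?posrE ?ltr0n // ler_nat ltnS. Qed.

Lemma radius_lt (R : realType) (eps : R) : 0 < eps -> exists k, radius k < eps.
Proof. by move=> eps0; have [k] := ltr_add_invr eps0; rewrite add0r; exists k. Qed.

Section complete_metric.
Variables (R : realType) (G : ptopologicalType) (d : G -> G -> R).
Hypothesis Hd : complete_compatible_metric d.

Definition dball x r := [set y | d x y < r].
Definition dcball x r := [set y | d x y <= r].

Let d_refl x : d x x = 0.
Proof. by case: Hd => eq0 _ _ _ _; apply/eq0. Qed.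
Let d_sym x y : d x y = d y x.
Proof. by case: Hd. Qed.
Let d_triangle x y z : d x z <= d x y + d y z.
Proof. by case: Hd. Qed.
Let d_openP (U : set G) : open U <->
  (forall x, U x -> exists2 r : R, 0 < r & dball x r `<=` U).
Proof. by case: Hd. Qed.

Lemma open_dball x r : open (dball x r).
Proof.
apply/d_openP => y; rewrite /dball /= => dxy.
exists (r - d x y); first by rewrite subr_gt0.
by move=> z /= dyz; have := d_triangle x y z; lra.
Qed.

Lemma dball_center x r : 0 < r -> dball x r x.
Proof. by rewrite /dball /= d_refl. Qed.

Lemma nbhs_dball x r : 0 < r -> nbhs x (dball x r).
Proof. by move=> r0; apply: open_nbhs_nbhs; split; [exact: open_dball | exact: dball_center]. Qed.

Lemma nbhs_dballP x W : nbhs x W -> exists2 r : R, 0 < r & dball x r `<=` W.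
Proof.
rewrite nbhsE => -[B [oB Bx] BW].
by have [r r0 rB] := proj1 (d_openP B) oB x Bx; exists r => // y /rB /BW.
Qed.

Lemma closed_dcball x r : closed (dcball x r).
Proof.
rewrite -[dcball x r]setCK; apply: open_closedC; apply/d_openP => y /= ryx.
rewrite /dcball /= in ryx.
have {ryx} rxy : r < d x y by rewrite ltNge; apply/negP.
exists (d x y - r); first by rewrite subr_gt0.
move=> z; rewrite /dball /dcball /= => dyz; apply/negP; rewrite -ltNge.
by have := d_triangle x z y; rewrite (d_sym z y); lra.
Qed.

Lemma cvg_of_dist_le_radius (c : nat -> G) :
  (forall j k, d (c j) (c k) <= radius j + radius k) -> exists x : G, c @ \oo --> x.
Proof.
move=> dc; case: Hd => _ _ _ _; apply => eps eps0.
have [M Meps] : exists M, radius M < eps / 2 by apply: radius_lt; lra.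
exists M => j k /(radius_le R) Mj /(radius_le R) Mk.
by have := dc j k; lra.
Qed.

Lemma compact_bigcap_dcball (e : nat -> G) (N : nat -> nat) :
  compact (\bigcap_k \bigcup_(i < N k) dcball (e i) (radius k)).
Proof.
(* K is closed and totally bounded: an ultrafilter containing K contains balls
   of every radius [radius k], and their centres form a Cauchy sequence. *)
set K := \bigcap_k _.
have Kcl : closed K.
  apply: closed_bigI => k _; rewrite bigcup_mkord.
  by apply: closed_bigsetU => i _; exact: closed_dcball.
rewrite compact_ultra => F UF FK; have PF := ultra_proper (F := F).
have near_center k : exists i, F (dcball (e i) (radius k)).
  by apply: (ultra_bigcup_ord UF); apply: filterS FK => y; exact.
have [ik Fik] := choice near_center.
pose c k := e (ik k).
have [x cx] : exists x : G, c @ \oo --> x.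
  apply: cvg_of_dist_le_radius => j k.
  have [y [cjy cky]] := filter_ex (filterI (Fik j) (Fik k)).
  by have := d_triangle (c j) y (c k); rewrite /dcball /= (d_sym y) in cjy cky *; lra.
have Fx : F --> x.
  move=> W /nbhs_dballP [r r0 rW].
  have r20 : 0 < r / 2 by lra.
  have [k1 k1r] := radius_lt r20.
  have [k2 _ k2x] := cx _ (nbhs_dball x r20).
  pose k := maxn k1 k2.
  have kr : radius k <= radius k1 :> R by apply: radius_le; exact: leq_maxl.
  have := k2x k (leq_maxr k1 k2); rewrite /dball /= => dxck.
  apply: filterS (Fik k) => y cky; apply: rW.
  by have := d_triangle x (c k) y; rewrite /dball /dcball /= in cky *; lra.
exists x; split => //; apply: Kcl => B FB.
by have [y [Ky By]] := filter_ex (filterI FK (Fx _ FB)); exists y.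
Qed.

Section tightness.
Variables (e : nat -> G) (mu : probability (borel G) R).
Hypothesis e_dense : dense (range e).

Let cover (r : R) (n : nat) := \bigcup_(i < n) dcball (e i) r.

Let closed_cover r n : closed (cover r n).
Proof. by rewrite /cover bigcup_mkord; apply: closed_bigsetU => i _; exact: closed_dcball. Qed.

Let measurable_coverC r n : measurable (~` cover r n : set (borel G)).
Proof. by apply: measurableC; apply: measurable_closed. Qed.

Let bigcup_cover r : 0 < r -> \bigcup_n cover r n = setT.
Proof.
move=> r0; apply/seteqP; split => // y _.
have [z [yz [n _ ez]]] := e_dense (ex_intro _ y (dball_center y r0)) (open_dball y r).
exists n.+1 => //; exists n => //=; rewrite /dcball /= ez d_sym; exact: ltW.
Qed.

Let probability_coverC_lt (r eps : R) : 0 < r -> 0 < eps ->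
  exists N, (mu (~` cover r N) < eps%:E)%E.
Proof.
move=> r0 eps0.
have : (mu \o (fun n => ~` cover r n)) @ \oo --> mu set0.
  have -> : set0 = \bigcap_n ~` cover r n by rewrite -setC_bigcup bigcup_cover // setCT.
  apply: nonincreasing_cvg_mu => //.
  - by rewrite (le_lt_trans (probability_le1 _ _)) ?ltry.
  - rewrite -setC_bigcup; apply: measurableC.
    by apply: bigcupT_measurable => n; exact: measurable_closed.
  - move=> m n mn; apply/subsetPset; apply: subsetC => y [i /= im ?].
    by exists i => //=; exact: leq_trans mn.
have eps0E : (0 < eps%:E)%E by rewrite lte_fin.
rewrite measure0 => /(_ _ (open_ereal_lt' eps0E)).
by move=> [N _ hN]; exists N; apply: hN => /=.
Qed.

Lemma probability_tight (eps : \bar R) : (0 < eps)%E ->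
  exists K : set G, [/\ closed K, compact K & (mu (~` K) < eps)%E].
Proof.
move=> eps0.
have [del del0 deleps] : exists2 del : R, 0 < del & (del%:E <= eps)%E.
  case: eps eps0 => [x|_|//]; first by rewrite lte_fin => x0; exists x.
  by exists 1; rewrite ?ltr01 ?leey.
have del20 : 0 < del / 2 by lra.
have eps_gt0 k : 0 < del / 2 / (2 ^ k.+1)%:R by rewrite divr_gt0 // ltr0n expn_gt0.
have [N muN] := choice (fun k => probability_coverC_lt (radius_gt0 R k) (eps_gt0 k)).
exists (\bigcap_k cover (radius k) (N k)); split.
- by apply: closed_bigI => k _; exact: closed_cover.
- exact: compact_bigcap_dcball.
rewrite setC_bigcap.
apply: le_lt_trans (measure_sigma_subadditive mu
  (F := fun k => ~` cover (radius k) (N k)) (fun k => measurable_coverC _ _) _ _) _.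
- by apply: bigcup_measurable => k _; exact: measurable_coverC.
- by [].
apply: (@le_lt_trans _ _ (del / 2)%:E); last by apply: lt_le_trans deleps; rewrite lte_fin; lra.
apply: le_trans (epsilon_trick0 xpredT (ltW del20)).
by apply: lee_nneseries => [k _ _|k _]; [exact: measure_ge0 | exact/ltW/muN].
Qed.

End tightness.
End complete_metric.

Lemma compact_translate_gt0 (R : realType) (G : ptopologicalType)
    (mul : G -> G -> G) (inv : G -> G) (one : G) (mu : probability (borel G) R) (V : set G) :
  is_topological_group mul inv one -> polish_space R G -> nbhs one V ->
  exists a (S : set G), [/\ closed S, compact S, (0 < mu S)%E & mul (inv a) @` S `<=` V].
Proof.
move=> HG [/dense_seq_of_separable [e e_dense] [d Hd]] /(nbhs_dballP Hd) [r r0 rV].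
have r20 : 0 < r / 2 by lra.
have [n muB] := probability_left_translate_gt0 HG mu e_dense
  (open_dball Hd one (r / 2)) (dball_center Hd one r20).
have [K [cK kK muK]] := probability_tight Hd mu e_dense muB.
pose C := mul (inv (e n)) @^-1` dcball d one (r / 2).
have cC : closed C by apply: (closed_preimage_mull HG); exact: closed_dcball.
exists (e n), (K `&` C); split.
- exact: closedI.
- exact: subclosed_compact (closedI cK cC) kK (@subIsetl _ K C).
- apply: measure_setI_gt0 muK; [|exact: measurable_closed|exact: measurable_closed|].
    by apply: measurable_open; apply: (open_preimage_mull HG); exact: open_dball.
  by apply: preimage_subset => x; exact: ltW.
- move=> _ [x [_ Cx] <-]; apply: rV; move: Cx; rewrite /C /dball /dcball /=; lra.
Qed.

Theorem lemma4p35 (R : realType) (G : ptopologicalType)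
  (mul : G -> G -> G) (inv : G -> G) (one : G)
  (HG : is_topological_group mul inv one) (HP : polish_space R G)
  (A : set G) (mu : probability (borel G) R)
  (Hmu : witnesses_openly_haar_null mul mu A)
  (V : set G) (HV : nbhs one V) :
  exists mu' : probability (borel G) R,
    [/\ witnesses_openly_haar_null mul mu' A,
        compact (msupport mu') & msupport mu' `<=` V].
Proof.
have [a [S [cS kS muS aSV]]] := compact_translate_gt0 mu HG HP HV.
have [c c0 [P [Pnull Pdom]]] := dominated_probability_on_image
  (measurable_continuous (continuous_mull HG (a := inv a))) (measurable_closed cS) muS.
have suppP : msupport P `<=` mul (inv a) @` S :=
  msupport_subset (closed_image_mull HG cS) Pnull.
exists P; split.
- apply: (witnesses_openly_haar_null_dominated HG (a := a) c0 _ Hmu) => X oX.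
  by apply: Pdom; exact: measurable_open.
- exact: subclosed_compact (closed_msupport (mu := P)) (compact_image_mull HG kS) suppP.
- exact: subset_trans suppP aSV.
Qed.
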